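(* Let $V$ be a vector space over a field $\mathbb F$, and let $\mathcal S=\{\tau^1,\tau^2,\tau^3,\dots\}\subset\mathcal T(V^* )$ contain exactly one symmetric tensor $\tau^n\in\odot^nV^*$ for each $n\in\mathbb N$. Then the permutation invariant subalgebra generated by $\mathcal S$ equals $$\mathcal A_{\mathrm{perm}}(\mathcal S)=\mathbb F\oplus\bigoplus_{n=1}^\infty\operatorname{span}\{\tau^{\mathbf P}:\mathbf P\in\mathbf{Part}(n)\}.$$
   Context: $\mathcal T(V^* )=\bigoplus_{n\ge0}\otimes^nV^*$, where $\otimes^nV^*$ is the space of $n$-multilinear forms $V^n\to\mathbb F$ ($\otimes^0V^*=\mathbb F$), with product $(\tau\otimes\tau')(v_1,\dots,v_{n+m})=\tau(v_1,\dots,v_n)\tau'(v_{n+1},\dots,v_{n+m})$ (scalars act by scalar multiplication). $S_n$ acts on $\otimes^nV^*$ by $(P_\sigma\tau)(v_1,\dots,v_n)=\tau(v_{\sigma^{-1}(1)},\dots,v_{\sigma^{-1}(n)})$; $\odot^nV^*$ is the subspace of tensors fixed by all $P_\sigma$. A unital subalgebra is a linear subspace containing $\mathbb F$ and closed under $\otimes$; it is graded if it is the direct sum of its intersections $\mathcal A_n$ with the $\otimes^nV^*$, and permutation invariant if it is graded and each $\mathcal A_n$ is preserved by $S_n$. $\mathcal A_{\mathrm{perm}}(\mathcal S)$ is the intersection of all permutation invariant unital subalgebras containing $\mathcal S$. $\mathbf{Part}(n)$ is the set of partitions $\mathbf P=\{P_1,\dots,P_r\}$ of $\{1,\dots,n\}$;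 for such $\mathbf P$ with $n_i=|P_i|$, $\tau^{\mathbf P}(v_1,\dots,v_n)=\prod_{i=1}^r\tau^{n_i}\big((v_j)_{j\in P_i}\big)$ (independent of the order within $P_i$ by symmetry). *)

From HB Require Import structures.
From mathcomp Require Import all_boot all_order all_fingroup all_algebra.
Set Implicit Arguments. Unset Strict Implicit. Unset Printing Implicit Defensive.
Import GRing.Theory.
Local Open Scope ring_scope.

Section Tensors.
Variables (F : fieldType) (V : lmodType F).

Definition nform (n : nat) := ('I_n -> V) -> F.

(* an element of T(V^dual) is a family of n-ary forms (one per degree) *)
Definition tens := forall n : nat, nform n.

Definition multilinear (n : nat) (f : nform n) : Prop :=
  forall (i : 'I_n) (v : 'I_n -> V) (a : F) (x y : V),
    f (fun j => if j == i then a *: x + y else v j)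
    = a * f (fun j => if j == i then x else v j)
      + f (fun j => if j == i then y else v j).

(* t lies in the direct sum \bigoplus_n \otimes^n V^dual *)
Definition is_tensor (t : tens) : Prop :=
  (forall n, multilinear (t n)) /\
  exists N : nat, forall n, (N <= n)%N -> forall v, t n v = 0.

Definition ext (m : nat) (v : 'I_m -> V) (j : nat) : V :=
  oapp v 0 (insub j : option 'I_m).

Definition tzero : tens := fun n v => 0.
Definition tadd (t s : tens) : tens := fun n v => t n v + s n v.
Definition tscale (a : F) (t : tens) : tens := fun n v => a * t n v.
Definition tconst (c : F) : tens := fun n v => if n is 0 then c else 0.
Definition tmul (t s : tens) : tens := fun k v =>
  \sum_(i < k.+1)
     t i (fun j : 'I_i => ext v j) * s (k - i)%N (fun j : 'I_(k - i) => ext v (i + j)%N).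

Definition thom (n : nat) (f : nform n) : tens := fun m v =>
  if m == n then f (fun j : 'I_n => ext v j) else 0.

Definition pact (n : nat) (s : 'S_n) (f : nform n) : nform n :=
  fun v => f (fun j => v ((s^-1)%g j)).

Definition sym_nform (n : nat) (f : nform n) : Prop :=
  forall s : 'S_n, pact s f = f.

Definition unital_subalg (A : tens -> Prop) : Prop :=
  (forall t, A t -> is_tensor t) /\
  A tzero /\
  (forall t s, A t -> A s -> A (tadd t s)) /\
  (forall a t, A t -> A (tscale a t)) /\
  (forall c, A (tconst c)) /\
  (forall t s, A t -> A s -> A (tmul t s)).

Definition graded (A : tens -> Prop) : Prop :=
  forall t, A t -> forall n, A (thom (t n)).

Definition perm_invariant (A : tens -> Prop) : Prop :=
  unital_subalg A /\ graded A /\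
  forall t, A t -> forall n (s : 'S_n), A (thom (pact s (t n))).

Definition A_perm (S : tens -> Prop) : tens -> Prop := fun t =>
  forall A, perm_invariant A -> (forall u, S u -> A u) -> A t.

Definition tauP (tau : forall n, nform n) (n : nat) (P : {set {set 'I_n}}) : nform n :=
  fun v => \prod_(B in P) tau #|B| (fun j : 'I_#|B| => v (enum_val j)).

Definition partition_span (tau : forall n, nform n) : tens -> Prop := fun t =>
  is_tensor t /\
  forall n, (0 < n)%N ->
    exists c : {set {set 'I_n}} -> F,
      t n = fun v => \sum_(P : {set {set 'I_n}} | partition P [set: 'I_n])
                        c P * tauP tau P v.

End Tensors.

(* The span of the tau^P is a
   permutation invariant unital subalgebra: tau^P (x) tau^Q is tau of the
   partition obtained by placing P and Q side by side, P_sigma tau^P is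
   tau^(sigma P) by symmetry of the tau^k, and degree 0 is spanned by
   tau^{} = 1.  Conversely, a permutation invariant subalgebra containing every
   tau^n contains every tau^P, by induction on the number of blocks: if B is a
   block of P, then tau^P is a permutation of tau^|B| (x) tau^Q, where Q is
   P \ {B} relabelled on the complement of B. *)

From HB Require Import structures.
From mathcomp Require Import all_boot all_order all_fingroup all_algebra.
From Stdlib Require Import FunctionalExtensionality.
From mathcomp Require Import zify ring.
Set Implicit Arguments. Unset Strict Implicit. Unset Printing Implicit Defensive.
Import GRing.Theory.
Local Open Scope ring_scope.

Section SetPartitions.
Variable T : finType.
Implicit Types (A D : {set T}) (P Q : {set {set T}}).

Lemma imset_enum_val A : [set enum_val j | j in [set: 'I_#|A|]] = A.
Proof.
apply/setP => x; apply/imsetP/idP => [[j _ ->]|xA]; first exact: enum_valP.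
by exists (enum_rank_in xA x); rewrite ?enum_rankK_in.
Qed.

Lemma partition_set1 A : A != set0 -> partition [set A] A.
Proof. by move=> nA; rewrite /partition cover1 eqxx trivIset1 inE eq_sym. Qed.

Lemma disjoint_partitions P Q D1 D2 :
  partition P D1 -> partition Q D2 -> [disjoint D1 & D2] -> [disjoint P & Q].
Proof.
move=> pP pQ dD; apply/pred0P => X /=; apply/negP => /andP [XP XQ].
have /set0Pn [x xX] := partition_neq0 pP XP.
by move/disjointFr: dD => /(_ x (subsetP (partitionS pP XP) x xX));
  rewrite (subsetP (partitionS pQ XQ) x xX).
Qed.

Lemma partitionU P Q D1 D2 :
  partition P D1 -> partition Q D2 -> [disjoint D1 & D2] ->
  partition (P :|: Q) (D1 :|: D2).
Proof.
move=> pP pQ dD; rewrite /partition inE negb_or (partition0 pP) (partition0 pQ).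
rewrite /cover bigcup_setU -/(cover P) -/(cover Q).
rewrite (cover_partition pP) (cover_partition pQ) eqxx andbT /=.
apply: trivIsetU; rewrite ?(partition_trivIset pP) ?(partition_trivIset pQ) //.
by rewrite (cover_partition pP) (cover_partition pQ).
Qed.

End SetPartitions.

Lemma imset_preimset (T U : finType) (e : T -> U) (D : {set U}) :
  D \subset e @: setT -> e @: (e @^-1: D) = D.
Proof.
move=> sD; apply/setP => x; apply/idP/idP => [/imsetP [y]|xD].
  by rewrite inE => yD ->.
have /imsetP [y _ exy] := subsetP sD x xD.
by rewrite exy imset_f // inE -exy.
Qed.

Lemma imset_preimset_blocks (T U : finType) (e : T -> U) (P : {set {set U}}) :
  {in P, forall D : {set U}, D \subset e @: setT} ->
  [set e @: (C : {set T}) | C in [set e @^-1: (D : {set U}) | D in P]] = P.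
Proof.
move=> sP; rewrite -imset_comp -[RHS]imset_id.
by apply: eq_in_imset => D DP /=; rewrite imset_preimset ?sP.
Qed.

Lemma card_preimset_blocks (T U : finType) (e : T -> U) (P : {set {set U}}) :
  {in P, forall D : {set U}, D \subset e @: setT} ->
  #|[set e @^-1: (D : {set U}) | D in P]| = #|P|.
Proof.
move=> sP; apply: card_in_imset => D1 D2 D1P D2P E.
by rewrite -(imset_preimset (sP _ D1P)) -(imset_preimset (sP _ D2P)) E.
Qed.

Section CatPartition.
Variables a b : nat.

Lemma imset_lshift_rshift : lshift b @: [set: 'I_a] :|: @rshift a b @: [set: 'I_b] = setT.
Proof.
apply/setP => x; rewrite !inE -[x]splitK.
by case: (split x) => j /=; apply/orP; [left | right]; apply: imset_f.
Qed.

Lemma disjoint_lshift_rshift : [disjoint lshift b @: [set: 'I_a] & @rshift a b @: [set: 'I_b]].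
Proof.
rewrite -setI_eq0; apply/eqP/setP => x; rewrite !inE.
by apply/negP => /andP [/imsetP [i _ ->] /imsetP [j _ /eqP]]; rewrite eq_lrshift.
Qed.

Definition cat_partition (P : {set {set 'I_a}}) (Q : {set {set 'I_b}}) :
  {set {set 'I_(a + b)}} :=
  [set lshift b @: (X : {set 'I_a}) | X in P] :|:
  [set @rshift a b @: (X : {set 'I_b}) | X in Q].

Lemma partition_lshift (P : {set {set 'I_a}}) :
  partition P setT ->
  partition [set lshift b @: (X : {set 'I_a}) | X in P] (lshift b @: setT).
Proof. by rewrite imset_partition //; apply: lshift_inj. Qed.

Lemma partition_rshift (Q : {set {set 'I_b}}) :
  partition Q setT ->
  partition [set @rshift a b @: (X : {set 'I_b}) | X in Q] (@rshift a b @: setT).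
Proof. by rewrite imset_partition //; apply: rshift_inj. Qed.

Lemma partition_cat P Q :
  partition P setT -> partition Q setT -> partition (cat_partition P Q) setT.
Proof.
move=> pP pQ; rewrite -imset_lshift_rshift.
apply: partitionU (partition_lshift pP) (partition_rshift pQ) disjoint_lshift_rshift.
Qed.

End CatPartition.

Lemma partition_peel n (P : {set {set 'I_n}}) B : partition P setT -> B \in P ->
  exists m (Q : {set {set 'I_m}}) (g : 'I_(#|B| + m) -> 'I_n),
    [/\ partition Q setT, #|Q| = #|P|.-1, injective g, g @: setT = setT &
        [set g @: (X : {set _}) | X in cat_partition [set setT] Q] = P].
Proof.
move=> pP BP; set eB := @enum_val _ (mem B); set eC := @enum_val _ (mem (~: B)).
set Q := [set eC @^-1: (D : {set 'I_n}) | D in P :\ B].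
have sub_eC : {in P :\ B, forall D : {set 'I_n}, D \subset eC @: setT}.
  move=> D DP; rewrite /eC imset_enum_val -setTD.
  exact: partitionS (partitionD1 pP BP) DP.
have QP : [set eC @: (C : {set 'I_#|~: B|}) | C in Q] = P :\ B.
  exact: imset_preimset_blocks.
pose g i := match split i with inl j => eB j | inr j => eC j end.
have g_lshift j : g (lshift _ j) = eB j by rewrite /g (unsplitK (inl j)).
have g_rshift j : g (rshift _ j) = eC j by rewrite /g (unsplitK (inr j)).
have gT : g @: setT = setT.
  rewrite -imset_lshift_rshift imsetU -!imset_comp.
  rewrite (eq_imset _ g_lshift) (eq_imset _ g_rshift) /eB /eC !imset_enum_val.
  exact: setUCr.
exists #|~: B|, Q, g; split.
- rewrite -(imset_partition _ _ (@enum_val_inj _ (mem (~: B)))) QP /eC imset_enum_val -setTD.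
  exact: partitionD1.
- by rewrite card_preimset_blocks // (cardsD1 B P) BP.
- have ginj : {in setT &, injective g}.
    by apply/imset_injP; rewrite gT !cardsT !card_ord cardsC card_ord.
  by move=> x y; apply: ginj; rewrite inE.
- exact: gT.
rewrite /cat_partition imsetU !imset_set1 -imset_comp (eq_imset _ g_lshift) /eB imset_enum_val.
have g_rshiftC (C : {set 'I_#|~: B|}) : g @: (@rshift #|B| _ @: C) = eC @: C.
  by rewrite -imset_comp; apply: eq_imset.
by rewrite -imset_comp (eq_imset _ g_rshiftC) QP setD1K.
Qed.

Section Forms.
Variables (F : fieldType) (V : lmodType F).

Lemma tens_ext (t s : tens V) : (forall d v, t d v = s d v) -> t = s.
Proof.
move=> ts; apply: functional_extensionality_dep => d.
exact: functional_extensionality.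
Qed.

Lemma ext_val m (v : 'I_m -> V) (i : 'I_m) (j : nat) : j = i -> ext v j = v i.
Proof. by move->; rewrite /ext valK. Qed.

Lemma ext_restrict i (G : nat -> V) (j : nat) :
  (j < i)%N -> ext (fun k : 'I_i => G k) j = G j.
Proof. by move=> ji; rewrite (@ext_val _ _ (Ordinal ji)). Qed.

Lemma thomE n (f : nform V n) : (thom f : tens V) n = f.
Proof.
apply: functional_extensionality => v; rewrite /thom eqxx; congr f.
by apply: functional_extensionality => j; apply: ext_val.
Qed.

Lemma nform0_const (f : nform V 0) v w : f v = f w.
Proof. by congr f; apply: functional_extensionality => -[]. Qed.

Lemma thom0 (f : nform V 0) v : thom f = tconst (f v).
Proof.
apply: tens_ext => -[|d] w; rewrite /thom /tconst //=.
exact: nform0_const.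
Qed.

Lemma multilinear0 (f : nform V 0) : multilinear f.
Proof. by case. Qed.

Lemma sym_nform0 (f : nform V 0) : sym_nform f.
Proof.
by move=> s; apply: functional_extensionality => v; rewrite /pact; apply: nform0_const.
Qed.

Lemma sym_nform_reindex k (f : nform V k) n (e1 e2 : 'I_k -> 'I_n) (v : 'I_n -> V) :
  sym_nform f -> injective e1 -> injective e2 -> e1 @: setT = e2 @: setT ->
  f (fun j => v (e1 j)) = f (fun j => v (e2 j)).
Proof.
move=> fsym e1inj e2inj e12.
have /fin_all_exists [s e1s] : forall j, exists j', e1 j' = e2 j.
  move=> j; have /imsetP [j' _ ->] : e2 j \in e1 @: setT by rewrite e12 imset_f ?inE.
  by exists j'.
have sinj : injective s by move=> j j' ss'; apply: e2inj; rewrite -!e1s ss'.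
have := fsym ((perm sinj)^-1)%g.
move/(congr1 (fun g => g (fun j => v (e1 j)))); rewrite /pact invgK => <-.
by congr f; apply: functional_extensionality => j; rewrite permE e1s.
Qed.

Lemma tmul_thom a b (f : nform V a) (g : nform V b) :
  tmul (thom f) (thom g) =
  thom (fun w : 'I_(a + b) -> V =>
          f (fun j => w (lshift b j)) * g (fun j => w (rshift a j))).
Proof.
apply: tens_ext => d v; rewrite /tmul.
pose T := f (fun j : 'I_a => ext v j) *
  (if (d - a)%N == b then g (fun j : 'I_b => ext v (a + j)) else 0).
rewrite (eq_bigr (fun i : 'I_d.+1 => if (i : nat) == a then T else 0)); last first.
  move=> i _; rewrite /thom /T; case: eqP => [ia|_]; last by rewrite mul0r.
  have ad : (a <= d)%N by rewrite -ia -ltnS.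
  congr (f _ * _); first by apply: functional_extensionality => j; rewrite ext_restrict // ia.
  have -> : (d - a)%N = (d - i)%N by rewrite ia.
  case: eqP => // db; congr g; apply: functional_extensionality => j.
  have jdi : (j < d - i)%N by rewrite db.
  by rewrite (ext_restrict (fun k => ext v (i + k))) // ia.
rewrite -big_mkcond (big_ord1_eq _ (fun _ => T)) /thom /T.
case: (d =P (a + b)%N) => [dab | dab].
  by subst d; rewrite ltnS leq_addr addKn eqxx.
case: ifP => // ad; case: eqP; last by rewrite mulr0.
by move=> db; case: dab; rewrite -db subnKC // -ltnS.
Qed.

Lemma big_tadd_apply I (r : seq I) (p : pred I) (G : I -> tens V) d v :
  (\big[@tadd F V/@tzero F V]_(i <- r | p i) G i) d v = \sum_(i <- r | p i) G i d v.
Proof. by apply: (big_morph (fun u : tens V => u d v)). Qed.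

Lemma thom_sum n I (r : seq I) (p : pred I) (G : I -> nform V n) :
  thom (fun v => \sum_(i <- r | p i) G i v) =
  \big[@tadd F V/@tzero F V]_(i <- r | p i) thom (G i).
Proof.
apply: tens_ext => d v; rewrite big_tadd_apply /thom.
by case: eqP => // _; rewrite big1.
Qed.

Lemma thom_scale n a (f : nform V n) : thom (fun v => a * f v) = tscale a (thom f).
Proof. by apply: tens_ext => d v; rewrite /thom /tscale; case: eqP; rewrite ?mulr0. Qed.

Lemma tens_sum_thom (t : tens V) N : (forall n, (N <= n)%N -> forall v, t n v = 0) ->
  t = \big[@tadd F V/@tzero F V]_(i < N) thom (t i).
Proof.
move=> tN; apply: tens_ext => d v; rewrite big_tadd_apply.
rewrite (eq_bigr (fun i : 'I_N => if (i : nat) == d then t d v else 0)); last first.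
  move=> i _; rewrite eq_sym /thom; case: eqP => // di; subst d.
  by congr (t _); apply: functional_extensionality => j; apply: ext_val.
by rewrite -big_mkcond (big_ord1_eq _ (fun _ => t d v)); case: ltnP => // Nd; rewrite tN.
Qed.

End Forms.

Section PartitionProducts.
Variables (F : fieldType) (V : lmodType F) (tau : forall n, nform V n).
Arguments tau : clear implicits.
Hypothesis tau_ml : forall n, multilinear (tau n).
Hypothesis tau_sym : forall n, sym_nform (tau n).

Lemma tau_reindex n k1 k2 (e1 : 'I_k1 -> 'I_n) (e2 : 'I_k2 -> 'I_n) (v : 'I_n -> V) :
  injective e1 -> injective e2 -> e1 @: setT = e2 @: setT ->
  tau k1 (fun j => v (e1 j)) = tau k2 (fun j => v (e2 j)).
Proof.
move=> e1inj e2inj e12; have k12 : k1 = k2.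
  move: (card_imset setT e1inj) (card_imset setT e2inj).
  by rewrite e12 !cardsT !card_ord => ->.
by subst k2; apply: sym_nform_reindex v (@tau_sym k1) e1inj e2inj e12.
Qed.

Lemma tauP_imset m n (g : 'I_m -> 'I_n) (P : {set {set 'I_m}}) (v : 'I_n -> V) :
  injective g ->
  tauP tau P (fun j => v (g j)) = tauP tau [set g @: (B : {set 'I_m}) | B in P] v.
Proof.
move=> ginj; rewrite /tauP big_imset /=; last by move=> B1 B2 _ _; apply: imset_inj.
apply: eq_bigr => B _; apply: tau_reindex.
- by move=> x y /ginj /enum_val_inj.
- exact: enum_val_inj.
by rewrite imset_enum_val imset_comp imset_enum_val.
Qed.

Lemma tauP_set0 n (v : 'I_n -> V) : tauP tau set0 v = 1.
Proof. by rewrite /tauP big_set0. Qed.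

Lemma tauP_setT k : tauP tau [set [set: 'I_k]] = tau k.
Proof.
apply: functional_extensionality => v; rewrite /tauP big_set1.
apply: (tau_reindex (e1 := enum_val) (e2 := id)).
- exact: enum_val_inj.
- by [].
by rewrite imset_enum_val imset_id.
Qed.

(* Only the block of P containing i depends on the i-th argument. *)
Lemma tauP_multilinear n (P : {set {set 'I_n}}) :
  partition P setT -> multilinear (tauP tau P).
Proof.
move=> pP i v a x y; set B0 := pblock P i.
have iP : i \in cover P by rewrite (cover_partition pP) inE.
have B0P : B0 \in P := pblock_mem iP.
have iB0 : i \in B0 by rewrite /B0 mem_pblock.
set i0 := enum_rank_in iB0 i.
have enum_val_eq j : (enum_val j == i) = (j == i0).
  by rewrite -{1}(enum_rankK_in iB0 iB0) (inj_eq enum_val_inj).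
have other_blocks z : \prod_(B in P | B != B0)
    tau #|B| (fun j => (fun k => if k == i then z else v k) (enum_val j))
  = \prod_(B in P | B != B0) tau #|B| (fun j => v (enum_val j)).
  apply: eq_bigr => B /andP [BP BB0]; congr (tau _).
  apply: functional_extensionality => j /=; case: eqP => // ji.
  by move: BB0; rewrite /B0 -ji (def_pblock (partition_trivIset pP) BP) ?eqxx ?enum_valP.
have block0 z : (fun j => (fun k => if k == i then z else v k) (enum_val j))
    = (fun j : 'I_#|B0| => if j == i0 then z else v (enum_val j)).
  by apply: functional_extensionality => j /=; rewrite enum_val_eq; case: eqP.
rewrite /tauP !(bigD1 B0 B0P) /= !other_blocks !block0 tau_ml; ring.
Qed.

Lemma tauP_cat a b (P : {set {set 'I_a}}) (Q : {set {set 'I_b}}) (w : 'I_(a + b) -> V) :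
  partition P setT -> partition Q setT ->
  tauP tau (cat_partition P Q) w =
  tauP tau P (fun j => w (lshift b j)) * tauP tau Q (fun j => w (rshift a j)).
Proof.
move=> pP pQ; rewrite (tauP_imset _ _ (@lshift_inj a b)) (tauP_imset _ _ (@rshift_inj a b)).
rewrite /tauP /cat_partition (eq_bigl [predU [set lshift b @: (X : {set 'I_a}) | X in P]
  & [set @rshift a b @: (X : {set 'I_b}) | X in Q]]); last by move=> B; rewrite !inE.
rewrite bigU //.
exact: disjoint_partitions (partition_lshift b pP) (partition_rshift a pQ)
  (disjoint_lshift_rshift a b).
Qed.

Lemma thom_tauP_cat a b (P : {set {set 'I_a}}) (Q : {set {set 'I_b}}) :
  partition P setT -> partition Q setT ->
  thom (tauP tau (cat_partition P Q)) = tmul (thom (tauP tau P)) (thom (tauP tau Q)).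
Proof.
move=> pP pQ; rewrite tmul_thom; congr thom.
by apply: functional_extensionality => w; apply: tauP_cat.
Qed.

Definition span_tauP n (f : nform V n) : Prop :=
  exists c : {set {set 'I_n}} -> F, forall v,
    f v = \sum_(P : {set {set 'I_n}} | partition P [set: 'I_n]) c P * tauP tau P v.

Lemma span_tauP_eq n (f g : nform V n) : f =1 g -> span_tauP g -> span_tauP f.
Proof. by move=> fg [c gc]; exists c => v; rewrite fg gc. Qed.

Lemma span_tauP_tauP n (R : {set {set 'I_n}}) :
  partition R setT -> span_tauP (tauP tau R).
Proof.
move=> pR; exists (fun P => (P == R)%:R) => v.
rewrite (bigD1 R) //= eqxx mul1r big1 ?addr0 // => P /andP [_ /negbTE ->].
by rewrite mul0r.
Qed.

Lemma span_tauP0 n : span_tauP (fun _ : 'I_n -> V => 0).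
Proof. by exists (fun _ => 0) => v; rewrite big1 // => P _; rewrite mul0r. Qed.

Lemma span_tauPD n (f g : nform V n) :
  span_tauP f -> span_tauP g -> span_tauP (fun v => f v + g v).
Proof.
move=> [c fc] [d gd]; exists (fun P => c P + d P) => v.
by rewrite fc gd -big_split; apply: eq_bigr => P _; rewrite mulrDl.
Qed.

Lemma span_tauPZ n a (f : nform V n) : span_tauP f -> span_tauP (fun v => a * f v).
Proof.
move=> [c fc]; exists (fun P => a * c P) => v.
by rewrite fc mulr_sumr; apply: eq_bigr => P _; rewrite mulrA.
Qed.

Lemma span_tauP_sum n I (r : seq I) (p : pred I) (G : I -> nform V n) :
  (forall i, p i -> span_tauP (G i)) -> span_tauP (fun v => \sum_(i <- r | p i) G i v).
Proof.
move=> Gspan; elim: r => [|x r IH].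
  by apply: span_tauP_eq (@span_tauP0 n) => v; rewrite big_nil.
case px: (p x).
  by apply: span_tauP_eq (span_tauPD (Gspan x px) IH) => v; rewrite big_cons px.
by apply: span_tauP_eq IH => v; rewrite big_cons px.
Qed.

Lemma span_tauP_multilinear n (f : nform V n) : span_tauP f -> multilinear f.
Proof.
move=> [c fc] i v a x y; rewrite !fc mulr_sumr -big_split /=.
by apply: eq_bigr => P pP; rewrite tauP_multilinear //; ring.
Qed.

Lemma span_tauP_nform0 (f : nform V 0) : span_tauP f.
Proof.
have setT0 : [set: 'I_0] = set0 by apply/setP => -[].
exists (fun _ => f (fun _ => 0)) => v.
rewrite (bigD1 set0) /=; last by rewrite setT0 partition_set0.
rewrite big1 ?addr0; first by rewrite tauP_set0 mulr1; apply: nform0_const.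
by move=> P /andP []; rewrite setT0 partition_set0 => /eqP ->; rewrite eqxx.
Qed.

Lemma span_tauP_tau n : (0 < n)%N -> span_tauP (tau n).
Proof.
move=> n0; rewrite -tauP_setT; apply/span_tauP_tauP/partition_set1.
by rewrite -card_gt0 cardsT card_ord.
Qed.

Lemma span_tauP_mul a b (f : nform V a) (g : nform V b) :
  span_tauP f -> span_tauP g ->
  span_tauP (fun w : 'I_(a + b) -> V =>
               f (fun j => w (lshift b j)) * g (fun j => w (rshift a j))).
Proof.
move=> [c fc] [d gd].
apply: (@span_tauP_eq _ _ (fun w =>
  \sum_(P : {set {set 'I_a}} | partition P setT) \sum_(Q : {set {set 'I_b}} | partition Q setT)
     (c P * d Q) * tauP tau (cat_partition P Q) w)).
  move=> w; rewrite fc gd big_distrlr /=; apply: eq_bigr => P pP; apply: eq_bigr => Q pQ.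
  by rewrite tauP_cat //; ring.
apply: span_tauP_sum => P pP; apply: span_tauP_sum => Q pQ; apply: span_tauPZ.
exact/span_tauP_tauP/partition_cat.
Qed.

Lemma span_tauP_tmul (t s : tens V) (k : nat) :
  (forall n, span_tauP (t n)) -> (forall n, span_tauP (s n)) ->
  span_tauP ((tmul t s : tens V) k).
Proof.
move=> tspan sspan; apply: span_tauP_sum => i _.
have := ltn_ord i; move: (nat_of_ord i) => a; rewrite ltnS => ak.
move: (k - a)%N (subnKC ak) => b abk; clear ak; subst k.
apply: span_tauP_eq (span_tauP_mul (tspan a) (sspan b)) => w.
by congr (_ * _); congr (_ _); apply: functional_extensionality => j; apply: ext_val.
Qed.

Lemma span_tauP_pact n (s : 'S_n) (f : nform V n) : span_tauP f -> span_tauP (pact s f).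
Proof.
move=> [c fc].
apply: (@span_tauP_eq _ _ (fun v => \sum_(P : {set {set 'I_n}} | partition P setT)
    c P * tauP tau [set (s^-1)%g @: (B : {set 'I_n}) | B in P] v)).
  by move=> v; rewrite /pact fc; apply: eq_bigr => P _; rewrite tauP_imset //; apply: perm_inj.
apply: span_tauP_sum => P pP; apply: span_tauPZ; apply: span_tauP_tauP.
have sT : (s^-1)%g @: [set: 'I_n] = setT.
  by apply/setP => x; rewrite inE -[x](permKV (s^-1)%g) imset_f ?inE.
by rewrite -sT imset_partition //; apply: perm_inj.
Qed.

End PartitionProducts.

Section PartitionSpan.
Variables (F : fieldType) (V : lmodType F) (tau : forall n, nform V n).
Arguments tau : clear implicits.
Hypothesis tau_ml : forall n, multilinear (tau n).
Hypothesis tau_sym : forall n, sym_nform (tau n).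

Lemma partition_spanP (t : tens V) :
  partition_span tau t <->
  (exists N, forall n, (N <= n)%N -> forall v, t n v = 0) /\ forall n, span_tauP tau (t n).
Proof.
split=> [[[_ tN] tspan] | [tN tspan]].
  split=> // -[|n]; first exact: span_tauP_nform0.
  by have [c ->] := tspan n.+1 isT; exists c.
split; first by split=> // n; apply: span_tauP_multilinear.
by move=> n _; have [c tc] := tspan n; exists c; apply: functional_extensionality.
Qed.

Lemma partition_span_thom n (f : nform V n) : span_tauP tau f -> partition_span tau (thom f).
Proof.
move=> fspan; apply/partition_spanP; split.
  by exists n.+1 => m nm v; rewrite /thom; case: eqP => // mn; exfalso; lia.
move=> m; have [->|mn] := eqVneq m n; first by rewrite thomE.
by apply: span_tauP_eq (span_tauP0 tau m) => v; rewrite /thom (negbTE mn).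
Qed.

Lemma partition_span_unital_subalg : unital_subalg (partition_span tau).
Proof.
split; first by move=> t [].
split; first by apply/partition_spanP; split=> [|n]; [exists 0%N | apply: span_tauP0].
split.
  move=> t s /partition_spanP [[N tN] tspan] /partition_spanP [[M sM] sspan].
  apply/partition_spanP; split=> [|n]; last exact: span_tauPD.
  exists (maxn N M) => n; rewrite geq_max => /andP [Nn Mn] v.
  by rewrite /tadd tN ?sM ?addr0.
split.
  move=> a t /partition_spanP [[N tN] tspan]; apply/partition_spanP.
  split=> [|n]; last exact: span_tauPZ.
  by exists N => n Nn v; rewrite /tscale tN ?mulr0.
split.
  move=> c; rewrite -(thom0 (fun _ : 'I_0 -> V => c) (fun _ => 0)).
  exact/partition_span_thom/span_tauP_nform0.
move=> t s /partition_spanP [[N tN] tspan] /partition_spanP [[M sM] sspan].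
apply/partition_spanP; split=> [|n]; last exact: span_tauP_tmul.
exists (N + M)%N => k NMk v; rewrite /tmul big1 // => i _.
have [Ni | iN] := leqP N i; first by rewrite tN ?mul0r.
by rewrite sM ?mulr0 //; have := ltn_ord i; lia.
Qed.

Lemma partition_span_perm_invariant : perm_invariant (partition_span tau).
Proof.
split; first exact: partition_span_unital_subalg.
split=> t /partition_spanP [_ tspan] n; first exact: partition_span_thom.
by move=> s; apply/partition_span_thom/span_tauP_pact.
Qed.

Section Generated.
Variable A : tens V -> Prop.
Hypothesis A_inv : perm_invariant A.
Hypothesis A_tau : forall n, (0 < n)%N -> A (thom (tau n)).

Lemma A_big_tadd I (r : seq I) (p : pred I) (G : I -> tens V) :
  (forall i, p i -> A (G i)) -> A (\big[@tadd F V/@tzero F V]_(i <- r | p i) G i).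
Proof.
have [[_ [A0 [AD _]]] _] := A_inv.
by move=> AG; apply: (big_ind A) => //; apply: AD.
Qed.

Lemma A_thom_tauP_imset n1 n2 (g : 'I_n1 -> 'I_n2) (R : {set {set 'I_n1}}) :
  injective g -> g @: setT = setT -> A (thom (tauP tau R)) ->
  A (thom (tauP tau [set g @: (X : {set 'I_n1}) | X in R])).
Proof.
move=> ginj gT AR; have n12 : n1 = n2.
  by move: (card_imset setT ginj); rewrite gT !cardsT !card_ord.
subst n2; have [_ [_ A_pact]] := A_inv.
have := A_pact _ AR n1 ((perm ginj)^-1)%g; rewrite thomE.
congr (A (thom _)); apply: functional_extensionality => v; rewrite /pact invgK.
rewrite -(tauP_imset tau_sym _ _ ginj); congr (tauP _ _ _).
by apply: functional_extensionality => j; rewrite permE.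
Qed.

Lemma A_thom_tauP n (P : {set {set 'I_n}}) : partition P setT -> A (thom (tauP tau P)).
Proof.
have [[_ [_ [_ [_ [A1 Amul]]]]] _] := A_inv.
move eP : #|P| => r; elim: r n P eP => [|r IH] n P eP pP.
  have P0 : P = set0 by apply/cards0_eq.
  have n0 : n = 0%N.
    have := cover_partition pP; rewrite P0 /cover big_set0 => T0.
    by rewrite -(card_ord n) -cardsT -T0 cards0.
  subst n; rewrite (thom0 _ (fun _ => 0)) P0 tauP_set0; exact: A1.
have /set0Pn [B BP] : P != set0 by rewrite -card_gt0 eP.
have [m [Q [g [pQ cQ ginj gT <-]]]] := partition_peel pP BP.
apply: A_thom_tauP_imset => //.
have BT : partition [set [set: 'I_#|B|]] setT.
  by apply: partition_set1; rewrite -card_gt0 cardsT card_ord card_gt0 (partition_neq0 pP).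
rewrite thom_tauP_cat // tauP_setT //; apply: Amul; last by apply: IH => //; rewrite cQ eP.
by apply: A_tau; rewrite card_gt0 (partition_neq0 pP).
Qed.

Lemma A_thom_span n (f : nform V n) : span_tauP tau f -> A (thom f).
Proof.
have [[_ [_ [_ [AZ _]]]] _] := A_inv.
move=> [c fc]; have -> : f = fun v => \sum_(P : {set {set 'I_n}} | partition P setT)
    c P * tauP tau P v by apply: functional_extensionality.
rewrite thom_sum; apply: A_big_tadd => P pP.
by rewrite thom_scale; apply/AZ/A_thom_tauP.
Qed.

Lemma partition_span_sub (t : tens V) : partition_span tau t -> A t.
Proof.
move=> /partition_spanP [[N tN] tspan]; rewrite (tens_sum_thom tN).
by apply: A_big_tadd => i _; apply: A_thom_span.
Qed.

End Generated.
End PartitionSpan.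

Theorem proposition2p9 (F : fieldType) (V : lmodType F)
  (tau : forall n : nat, nform V n)
  (hlin : forall n, (0 < n)%N -> multilinear (tau n))
  (hsym : forall n, (0 < n)%N -> sym_nform (tau n)) :
  forall t : tens V,
    A_perm (fun u => exists2 n, (0 < n)%N & u = thom (tau n)) t
    <-> partition_span tau t.
Proof.
have tau_ml n : multilinear (tau n).
  by case: n => [|n]; [apply: multilinear0 | apply: hlin].
have tau_sym n : sym_nform (tau n).
  by case: n => [|n]; [apply: sym_nform0 | apply: hsym].
move=> t; split=> [At | tspan A A_inv A_gen].
  apply: At (partition_span_perm_invariant tau_ml tau_sym) _ => _ [n n0 ->].
  exact/partition_span_thom/span_tauP_tau.
apply: (partition_span_sub tau_ml tau_sym A_inv _ tspan) => n n0.
by apply: A_gen; exists n.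
Qed.
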